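(* For every integer $n\geq 1$, the empty graph $\overline{K_n}$ on $n$ vertices satisfies $\operatorname{th}_{\operatorname{H}}(\overline{K_n})=\lceil 2\sqrt{n}-1\rceil$.
   Context: All graphs are finite, simple and undirected. Hopping color change rule: a blue vertex $v$ may force a white vertex $w$ to become blue if $v$ has not previously performed a force and every neighbor of $v$ is blue. For an initial blue set $B$, a chronological list of forces of $B$ is a sequence of such forces applied one at a time until no further force is possible; its underlying unordered set is a set of forces of $B$. $B$ is a hopping forcing set if some chronological list of forces of $B$ turns all vertices blue. For a set of forces $\mathcal F$ of $B$, let $\mathcal F^{(0)}=B$ and for $t\geq1$ let $\mathcal F^{(t)}$ be the set of vertices $w\notin U_{t-1}:=\bigcup_{i=0}^{t-1}\mathcal F^{(i)}$ for which there is $(v\to w)\in\mathcal F$ with $v\in U_{t-1}$ and all neighbors of $v$ in $U_{t-1}$. $\operatorname{pt}_{\operatorname{H}}(G;\mathcal F)$ is the least $t$ with $\bigcup_{i=0}^t\mathcal F^{(i)}=V(G)$ ($\infty$ if none); $\operatorname{pt}_{\operatorname{H}}(G;B)$ is the minimum of $\operatorname{pt}_{\operatorname{H}}(G;\mathcal F)$ over sets of forces $\mathcal F$ of $B$ ($\infty$ if $B$ is not a hopping forcing set). $\operatorname{th}_{\operatorname{H}}(G)=\min_{B\subseteq V(G)}\big(|B|+\operatorname{pt}_{\operatorname{H}}(G;B)\big)$. *)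

From mathcomp Require Import all_boot all_order all_algebra.
From mathcomp Require Import reals.
Set Implicit Arguments. Unset Strict Implicit. Unset Printing Implicit Defensive.

Section Hopping.
Variables (T : finType) (e : rel T).

(* v (blue, not used yet, all neighbors blue) may force a white w,
   when U is the current blue set and used the list of previous forcers *)
Definition can_force (U : {set T}) (used : seq T) (v w : T) : bool :=
  [&& v \in U, v \notin used, [forall u, e v u ==> (u \in U)] & w \notin U].

Fixpoint chron_ok (U : {set T}) (used : seq T) (s : seq (T * T)) : bool :=
  match s with
  | [::] => true
  | (v, w) :: s' => can_force U used v w && chron_ok (w |: U) (v :: used) s'
  end.

Definition blue_after (B : {set T}) (s : seq (T * T)) : {set T} :=
  B :|: [set w | w \in map snd s].

Definition chron_list (B : {set T}) (s : seq (T * T)) : bool :=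
  chron_ok B [::] s &&
  [forall v, forall w, ~~ can_force (blue_after B s) (map fst s) v w].

Definition force_set (B : {set T}) (F : {set T * T}) : Prop :=
  exists s, chron_list B s /\ F = [set x in s].

Definition hopping_forcing (B : {set T}) : Prop :=
  exists s, chron_list B s /\ blue_after B s = setT.

Fixpoint blue_time (B : {set T}) (F : {set T * T}) (t : nat) : {set T} :=
  match t with
  | 0 => B
  | t'.+1 =>
    let U := blue_time B F t' in
    U :|: [set w | (w \notin U) &&
            [exists v, [&& (v, w) \in F, v \in U & [forall u, e v u ==> (u \in U)]]]]
  end.

Definition pt_H_is (B : {set T}) (t : nat) : Prop :=
  hopping_forcing B /\
  (exists F, force_set B F /\ blue_time B F t = setT) /\
  (forall F t', force_set B F -> blue_time B F t' = setT -> t <= t').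

Definition th_H_is (k : nat) : Prop :=
  (exists B t, pt_H_is B t /\ #|B| + t = k) /\
  (forall B t, pt_H_is B t -> k <= #|B| + t).

End Hopping.

Definition empty_graph (n : nat) : rel 'I_n := fun _ _ => false.
Arguments empty_graph n : clear implicits.

From mathcomp Require Import all_boot all_order all_algebra.
From mathcomp Require Import reals.
From mathcomp Require Import zify lra.
Import Order.TTheory GRing.Theory Num.Theory.

Set Implicit Arguments.
Unset Strict Implicit.
Unset Printing Implicit Defensive.

(* In a set of forces every vertex forces at most once, so the
   forces define a partial function.  In a graph without edges every blue
   vertex may force immediately, hence a vertex turning blue at round t+1 is
   forced by a vertex that turned blue exactly at round t.  Therefore at most
   #|B| vertices turn blue per round and after t rounds at most #|B| (t + 1)
   vertices are blue: N <= #|B| (t + 1), and by AM-GM 4N <= (#|B| + t + 1)^2.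

   With B = {0, ..., b-1} and the forces i - b -> i, round t
   colours the block [b t, b (t + 1)), so pt_H = (N - 1) / b.  Choosing
   b = m / 2, where m is the least integer with 4N <= m^2, gives #|B| + t = m - 1.

   Finally m - 1 = ceil (2 sqrt N - 1), since (m - 1)^2 < 4N <= m^2. *)

Lemma th_H_is_of_bounds (T : finType) (e : rel T) (k : nat) :
  (exists B t, pt_H_is e B t /\ #|B| + t <= k) ->
  (forall B t, pt_H_is e B t -> k <= #|B| + t) -> th_H_is e k.
Proof.
move=> [B [t [pt le_k]]] lower; split => //.
by exists B, t; split => //; apply/eqP; rewrite eqn_leq le_k lower.
Qed.

Section EdgelessLowerBound.
Variables (T : finType) (e : rel T).
Hypothesis no_edge : forall u v, e u v = false.

Lemma chron_ok_forcers_uniq U used s :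
  chron_ok e U used s -> uniq used -> uniq (map fst s ++ used).
Proof.
elim: s U used => [|[v w] s IH] U used //= /andP[/and4P[_ v_fresh _ _] ok] uniq_used.
have := IH _ _ ok; rewrite /= v_fresh uniq_used => /(_ isT).
by rewrite -cat1s uniq_catCA.
Qed.

Lemma force_set_functional B F : force_set e B F ->
  forall v w w', (v, w) \in F -> (v, w') \in F -> w = w'.
Proof.
case=> s [/andP[ok _] ->] v w w'; rewrite !inE.
have := chron_ok_forcers_uniq ok isT; rewrite cats0.
elim: s {ok} => [|[a c] s IH] //= /andP[a_notin uniq_s].
rewrite !inE => /orP[/eqP[va ->]|vw_in] /orP[/eqP[va' ->]|vw'_in] //.
- by move: a_notin; rewrite -va (map_f fst vw'_in).
- by move: a_notin; rewrite -va' (map_f fst vw_in).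
- exact: IH.
Qed.

Section ForcingFunction.
Variables (B : {set T}) (F : {set T * T}).
Hypothesis F_functional : forall v w w', (v, w) \in F -> (v, w') \in F -> w = w'.

(* The vertex forced by v (or v itself if v does not force). *)
Definition forced_by v := odflt v [pick w | (v, w) \in F].

Lemma forced_byE v w : (v, w) \in F -> forced_by v = w.
Proof.
move=> vw; rewrite /forced_by; case: pickP => [w' vw'|none] /=.
  exact: F_functional vw' vw.
by have := none w; rewrite vw.
Qed.

Definition new_blue t :=
  blue_time e B F t :\: (if t is t'.+1 then blue_time e B F t' else set0).

(* Without edges, a vertex forcing at round t+1 would already have forced at
   round t had it been blue before, so it turned blue exactly at round t. *)
Lemma new_blue_step t : new_blue t.+1 \subset forced_by @: new_blue t.
Proof.
apply/subsetP => w; rewrite /new_blue /= in_setD => /andP[w_old].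
rewrite in_setU (negbTE w_old) /= inE w_old /= => /existsP[v /and3P[vw v_blue _]].
apply/imsetP; exists v; last by rewrite (forced_byE vw).
rewrite in_setD v_blue andbT.
case: t v_blue w_old => [|t] v_blue w_old; first by rewrite inE.
apply: contra w_old => v_earlier /=.
rewrite in_setU inE; case: (w \in blue_time e B F t) => //=.
apply/existsP; exists v; rewrite vw v_earlier /=.
by apply/forallP => u; rewrite no_edge.
Qed.

Lemma card_new_blue t : #|new_blue t| <= #|B|.
Proof.
elim: t => [|t IH]; first by rewrite /new_blue setD0.
apply: leq_trans (subset_leq_card (new_blue_step t)) _.
exact: leq_trans (leq_imset_card _ _) IH.
Qed.

Lemma card_blue_time t : #|blue_time e B F t| <= #|B| * t.+1.
Proof.
elim: t => [|t IH]; first by rewrite muln1.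
have split_round : blue_time e B F t.+1 \subset blue_time e B F t :|: new_blue t.+1.
  apply/subsetP => x x_blue; rewrite in_setU /new_blue in_setD x_blue andbT.
  by case: (x \in blue_time e B F t).
apply: leq_trans (subset_leq_card split_round) _.
apply: leq_trans (leq_card_setU _ _) _.
by rewrite mulnS addnC leq_add // card_new_blue.
Qed.
End ForcingFunction.

Lemma edgeless_cover_bound B F t :
  force_set e B F -> blue_time e B F t = setT -> #|T| <= #|B| * t.+1.
Proof.
move=> HF all_blue.
by have := card_blue_time B (force_set_functional HF) t; rewrite all_blue cardsT.
Qed.

End EdgelessLowerBound.

Section ShiftConstruction.
Variables (n' b : nat).
Local Notation N := n'.+1.
Local Notation G := (empty_graph N).
Hypotheses (b_gt0 : 0 < b) (b_leN : b <= N).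

Definition initial_block j : {set 'I_N} := [set i : 'I_N | i < j].

Lemma card_initial_block : #|initial_block b| = b.
Proof.
have -> : initial_block b = [set widen_ord b_leN i | i : 'I_b].
  apply/setP => i; rewrite !inE; apply/idP/imsetP => [lt_ib|[j _ ->]] //=.
  by exists (Ordinal lt_ib) => //; apply: val_inj.
by rewrite card_imset ?card_ord // => x y /(congr1 val) /= eq_xy; apply: val_inj.
Qed.

Definition shift_forces j k : seq ('I_N * 'I_N) :=
  [seq (inord (i - b), inord i) | i <- iota j k].

Lemma shift_forces_ok k : forall j used, j + k = N -> b <= j ->
  all (fun v : 'I_N => v < j - b) used ->
  chron_ok G (initial_block j) used (shift_forces j k).
Proof.
elim: k => [|k IH] j used jk_N b_le_j used_low //=.
have j_ltN : j < N by rewrite -jk_N addnS ltnS leq_addr.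
have jb_ltN : j - b < N by apply: leq_ltn_trans j_ltN; apply: leq_subr.
apply/andP; split.
  apply/and4P; split.
  - by rewrite inE inordK // ltn_subrL b_gt0 (leq_trans b_gt0 b_le_j).
  - by apply/negP => /(allP used_low) /=; rewrite inordK // ltnn.
  - by apply/forallP.
  - by rewrite inE inordK // ltnn.
have -> : inord j |: initial_block j = initial_block j.+1.
  apply/setP => i; rewrite !inE [in RHS]ltnS [in RHS]leq_eqVlt; congr (_ || _).
  by apply/eqP/eqP => [->|eq_ij]; [rewrite inordK | apply: val_inj; rewrite /= inordK].
apply: IH; [by rewrite addSnnS | exact: leqW |].
rewrite /= inordK //; apply/andP; split; first lia.
by apply/allP => v /(allP used_low) /=; lia.
Qed.

Definition shift_list := shift_forces b (N - b).

Lemma shift_list_blue : blue_after (initial_block b) shift_list = setT.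
Proof.
apply/setP => x; rewrite !inE; case: (ltnP x b) => //= b_le_x.
apply/mapP; exists (inord (x - b), inord x); last by rewrite /= inord_val.
by apply: map_f; rewrite mem_iota b_le_x subnKC // ltn_ord.
Qed.

Lemma shift_list_chron : chron_list G (initial_block b) shift_list.
Proof.
apply/andP; split; first by apply: shift_forces_ok => //; rewrite subnKC.
apply/forallP => v; apply/forallP => w; rewrite shift_list_blue.
by apply/negP => /and4P[_ _ _]; rewrite inE.
Qed.

Definition shift_force_set := [set x in shift_list].

Lemma shift_blue_time t (i : 'I_N) :
  i < b * t.+1 -> i \in blue_time G (initial_block b) shift_force_set t.
Proof.
elim: t i => [|t IH] i i_lt /=; first by rewrite inE -(muln1 b).
rewrite in_setU; case i_old: (i \in blue_time _ _ _ t) => //=.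
have b_le_i : b <= i.
  case: (ltnP i (b * t.+1)) => [/IH|lt_bt]; first by rewrite i_old.
  by apply: leq_trans lt_bt; rewrite leq_pmulr.
rewrite inE i_old /=; apply/existsP; exists (inord (i - b)); apply/and3P; split.
- rewrite inE; apply/mapP; exists (val i); last by rewrite inord_val.
  by rewrite mem_iota b_le_i subnKC // ltn_ord.
- apply: IH; rewrite inordK; last exact: leq_ltn_trans (leq_subr _ _) (ltn_ord i).
  by rewrite mulnS in i_lt; lia.
- by apply/forallP.
Qed.

Lemma shift_pt_H : pt_H_is G (initial_block b) ((N - 1) %/ b).
Proof.
split; [|split].
- by exists shift_list; split; [exact: shift_list_chron | exact: shift_list_blue].
- exists shift_force_set; split; first by exists shift_list; split => //; exact: shift_list_chron.
  apply/setP => i; rewrite inE; apply: shift_blue_time.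
  by have := ltn_ceil (N - 1) b_gt0; have := ltn_ord i; rewrite mulnC; lia.
- move=> F t HF all_blue.
  have := edgeless_cover_bound (fun _ _ => erefl false) HF all_blue.
  rewrite card_ord card_initial_block => cover.
  by rewrite -ltnS ltn_divLR //; lia.
Qed.

End ShiftConstruction.

(* For N > 0 there is m >= 2 with (m - 1)^2 < 4N <= m^2: the least m with
   4N <= m^2.  Then m = ceil (2 sqrt N) and the answer will be m - 1. *)
Lemma sqrt_ceil_exists N : 0 < N ->
  exists m, [/\ 2 <= m, 4 * N <= m ^ 2 & m.-1 ^ 2 < 4 * N].
Proof.
move=> N_gt0.
have some_j : exists j, 4 * N <= j ^ 2 by exists (2 * N); nia.
have [m four_N_le m_min] := ex_minnP some_j.
exists m; split => //.
- by case: m four_N_le {m_min} => [|[|m]] //=; nia.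
- by rewrite ltnNge; apply/negP => /m_min; lia.
Qed.

(* AM-GM: if N <= b s then any m with (m - 1)^2 < 4N satisfies m <= b + s. *)
Lemma sum_of_factors_lower_bound N m b s :
  m.-1 ^ 2 < 4 * N -> N <= b * s -> m <= b + s.
Proof.
move=> lt_m le_bs; have [agm _] := nat_AGM2 b s.
have : m.-1 ^ 2 < (b + s) ^ 2 by apply: leq_trans lt_m (leq_trans _ agm); lia.
by rewrite ltn_exp2r //; lia.
Qed.

(* Conversely, if 4N <= m^2 then splitting m as b + s with b = m / 2 and
   s = m - b gives N <= b s, since 4 b s = m^2 - (m mod 2). *)
Lemma balanced_factors N m : 4 * N <= m ^ 2 -> N <= m %/ 2 * (m - m %/ 2).
Proof.
move=> le_m; have m_split := divn_eq m 2; have r_lt2 : m %% 2 < 2 by rewrite ltn_mod.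
nia.
Qed.

Local Open Scope ring_scope.

Lemma ceil_two_sqrt (R : realType) (N m : nat) : (0 < m)%N ->
  (4 * N <= m ^ 2)%N -> (m.-1 ^ 2 < 4 * N)%N ->
  (m.-1)%:Z = Num.ceil (2 * Num.sqrt (N%:R : R) - 1).
Proof.
move=> m_gt0 le_m lt_m; apply/esym/ceil_def.
have sqrt_ge0 : 0 <= Num.sqrt (N%:R : R) by apply: sqrtr_ge0.
have sqrt_sq : Num.sqrt (N%:R : R) ^+ 2 = N%:R by rewrite sqr_sqrtr ?ler0n.
have m_pred : ((m.-1)%:Z%:~R : R) = m%:R - 1.
  by rewrite -{2}(prednK m_gt0) -natr1 addrK.
have le_mR : 4 * (N%:R : R) <= m%:R ^+ 2.
  by rewrite -natrX -[4]/(4%:R) -natrM ler_nat.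
have lt_mR : ((m%:R : R) - 1) ^+ 2 < 4 * N%:R.
  rewrite -{1}(prednK m_gt0) -natr1 addrK.
  by rewrite -natrX -[4]/(4%:R) -natrM ltr_nat.
by rewrite intrD m_pred; apply/andP; split; nra.
Qed.

Theorem proposition3p4 (R : realType) (n : nat) : (0 < n)%N ->
  exists k : nat, th_H_is (empty_graph n) k /\
    (k%:Z = Num.ceil (2 * Num.sqrt (n%:R : R) - 1)).
Proof.
case: n => [//|n'] _; set N := n'.+1.
have [m [m_ge2 le_m lt_m]] := @sqrt_ceil_exists N isT.
exists m.-1; split; last exact: ceil_two_sqrt (ltnW m_ge2) le_m lt_m.
have lower B t : pt_H_is (empty_graph N) B t -> (m.-1 <= #|B| + t)%N.
  move=> [_ [[F [HF all_blue]] _]].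
  have := edgeless_cover_bound (fun _ _ => erefl false) HF all_blue.
  rewrite card_ord => /(sum_of_factors_lower_bound lt_m); lia.
apply: th_H_is_of_bounds lower; set b := (m %/ 2)%N.
have b_gt0 : (0 < b)%N by rewrite divn_gt0.
have b_leN : (b <= N)%N by nia.
exists (initial_block n' b), ((N - 1) %/ b)%N; split; first exact: shift_pt_H.
have rounds : ((N - 1) %/ b < m - b)%N.
  by rewrite ltn_divLR // mulnC; have := balanced_factors le_m; lia.
by rewrite card_initial_block; lia.
Qed.
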